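(* Let $\Bbbk$ be a field of characteristic $2$, $G=\langle\sigma\rangle$ cyclic of order $4$ acting on $V=V_3$ with $\sigma x_1=x_1+x_2$, $\sigma x_2=x_2+x_3$, $\sigma x_3=x_3$ on the dual basis, and $A=\Bbbk[N^G(x_1),\ x_2(x_2+x_3),\ x_3]$ with $N^G(x_1)=\prod_{i=0}^3\sigma^i(x_1)$. Then $K_4=\ker(\Delta^4)=\Bbbk[V]$ is a free $A$-module with basis $\{1,\ x_1,\ x_2,\ x_1^2,\ x_1x_2,\ x_1^3,\ x_1^2x_2,\ x_1^3x_2\}$.
   Context: $\Delta=\sigma-\iota\in\Bbbk G$ acting on $\Bbbk[V]=\Bbbk[x_1,x_2,x_3]$; note $\Delta^4=\sigma^4-\iota=0$ in characteristic $2$. *)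

From mathcomp Require Import all_boot all_order all_algebra.
From mathcomp Require Import mpoly.
Set Implicit Arguments. Unset Strict Implicit. Unset Printing Implicit Defensive.
Import GRing.Theory.
Local Open Scope ring_scope.

Section Defs.
Variable k : fieldType.
Notation P := {mpoly k[3]}.

Definition x1 : P := 'X_(@Ordinal 3 0 isT).
Definition x2 : P := 'X_(@Ordinal 3 1 isT).
Definition x3 : P := 'X_(@Ordinal 3 2 isT).

Definition sigma (f : P) : P := f \mPo [tuple x1 + x2; x2 + x3; x3].

Definition Delta (f : P) : P := sigma f - f.

Definition K4 : pred P := fun f => iter 4 Delta f == 0.

Definition normx1 : P := \prod_(i < 4) iter i sigma x1.

(* A = k[N^G(x1), x2(x2+x3), x3]: the k-subalgebra generated by the three elements,
   i.e. the image of polynomial evaluation at these generators *)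
Definition inA (a : P) : Prop :=
  exists q : {mpoly k[3]}, a = q \mPo [tuple normx1; x2 * (x2 + x3); x3].

Definition basisB : 8.-tuple P :=
  [tuple 1; x1; x2; x1 ^+ 2; x1 * x2; x1 ^+ 3; x1 ^+ 2 * x2; x1 ^+ 3 * x2].

Definition free_A_basis (M : pred P) (b : 8.-tuple P) : Prop :=
  (forall i, tnth b i \in M) /\
  (forall f, f \in M -> exists a : 'I_8 -> P,
       (forall i, inA (a i)) /\ f = \sum_(i < 8) a i * tnth b i) /\
  (forall a : 'I_8 -> P, (forall i, inA (a i)) ->
       \sum_(i < 8) a i * tnth b i = 0 -> forall i, a i = 0).
End Defs.

From mathcomp Require Import all_boot all_order all_algebra.
From mathcomp Require Import mpoly ring.
Set Implicit Arguments. Unset Strict Implicit. Unset Printing Implicit Defensive.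
Import GRing.Theory.
Local Open Scope ring_scope.

(* In characteristic 2, sigma^2 is the substitution x1 |-> x1 + x3, so sigma^4 = 1
   and Delta^4 = sigma^4 - 1 = 0: K_4 is all of k[V].
   Over A, x3 lies in A, x2 is a root of the monic quadratic T^2 + x3 T - x2(x2+x3),
   and x1 is a root of the monic quartic obtained from
   N^G(x1) = x1 (x1 + x2) (x1 + x3) (x1 + x2 + x3), whose coefficients lie in A;
   hence the monomials x1^i x2^j (i < 4, j < 2) span k[V] over A.
   For freeness, the substitutions x1 |-> x1 + x2, x1 |-> x1 + x3 and x2 |-> x2 + x3
   fix A; applying them to a vanishing A-combination and subtracting lowers the
   degree in x1 or x2, which kills the coefficients one at a time. *)

Section CompMpoly.
Variables (R : comNzRingType) (n m : nat).

Lemma comp_mpolyA l (p : {mpoly R[n]}) (L : n.-tuple {mpoly R[m]})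
    (M : m.-tuple {mpoly R[l]}) :
  (p \mPo L) \mPo M = p \mPo [tuple tnth L i \mPo M | i < n].
Proof.
rewrite [p \mPo L]comp_mpolyE [p \mPo _]comp_mpolyE raddf_sum /=.
apply: eq_bigr => mon _; rewrite comp_mpolyZ rmorph_prod /=; congr (_ *: _).
by apply: eq_bigr => i _; rewrite rmorphXn /= tnth_mktuple.
Qed.

Lemma comp_mpoly_fixed (q : {mpoly R[n]}) (G : n.-tuple {mpoly R[m]})
    (S : m.-tuple {mpoly R[m]}) :
  (forall i, tnth G i \mPo S = tnth G i) -> (q \mPo G) \mPo S = q \mPo G.
Proof.
move=> fixG; rewrite comp_mpolyA; congr (_ \mPo _).
by apply: eq_from_tnth => i; rewrite tnth_mktuple fixG.
Qed.

Lemma comp_mpolyM (S : n.-tuple {mpoly R[m]}) (a b : {mpoly R[n]}) :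
  (a * b) \mPo S = (a \mPo S) * (b \mPo S).
Proof. exact: rmorphM. Qed.

Lemma comp_mpolyXn (S : n.-tuple {mpoly R[m]}) (a : {mpoly R[n]}) e :
  (a ^+ e) \mPo S = (a \mPo S) ^+ e.
Proof. exact: rmorphXn. Qed.

End CompMpoly.

Section Proposition4p19.
Variable k : fieldType.
Hypothesis k_char2 : 2%N \in [pchar k].
Local Notation P := {mpoly k[3]}.
Local Notation X1 := (x1 k).
Local Notation X2 := (x2 k).
Local Notation X3 := (x3 k).
Local Notation N := (normx1 k).
Local Notation Y := (X2 * (X2 + X3)).

Lemma mpoly_pchar2 : 2%N \in [pchar P].
Proof. by apply/andP; split=> //; rewrite -mpolyC_nat (pcharf0 k_char2) mpolyC0. Qed.

Lemma natr_even_mpoly n : ~~ odd n -> (n%:R : P) = 0.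
Proof.
move=> even_n; rewrite -[n]odd_double_half (negbTE even_n) add0n -mul2n natrM.
by rewrite (pcharf0 mpoly_pchar2) mul0r.
Qed.

(* [ring: rules] only rewrites each side separately, and cancels a coefficient only
   if it equals the left-hand side of a rule; hence the goal is first put in the
   sign-free form [a + b = 0], and each even coefficient that occurs gets a rule. *)
Local Notation even_rule n := (@natr_even_mpoly n isT).
Local Ltac ring_char2 :=
  apply/eqP; rewrite -subr_eq0 ?(oppr_pchar2 mpoly_pchar2); apply/eqP;
  ring: (even_rule 2) (even_rule 4) (even_rule 6) (even_rule 8) (even_rule 10)
    (even_rule 12) (even_rule 14).

Lemma comp_x1 (a b c : P) : X1 \mPo [tuple a; b; c] = a.
Proof. by rewrite /x1 comp_mpolyXU. Qed.
Lemma comp_x2 (a b c : P) : X2 \mPo [tuple a; b; c] = b.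
Proof. by rewrite /x2 comp_mpolyXU. Qed.
Lemma comp_x3 (a b c : P) : X3 \mPo [tuple a; b; c] = c.
Proof. by rewrite /x3 comp_mpolyXU. Qed.

Let compE := (comp_mpolyD, comp_mpolyM, comp_mpolyXn,
  comp_x1, comp_x2, comp_x3).

Lemma comp_mpoly_tuple3 (p a b c : P) (M : 3.-tuple P) :
  (p \mPo [tuple a; b; c]) \mPo M = p \mPo [tuple a \mPo M; b \mPo M; c \mPo M].
Proof.
rewrite comp_mpolyA; congr (_ \mPo _); apply: eq_from_tnth => i.
by rewrite tnth_mktuple; case: i => [[|[|[|//]]] ?]; rewrite /tnth.
Qed.

Definition shift12 : 3.-tuple P := [tuple X1 + X2; X2; X3].
Definition shift13 : 3.-tuple P := [tuple X1 + X3; X2; X3].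
Definition shift23 : 3.-tuple P := [tuple X1; X2 + X3; X3].

Lemma sigma_sigma (f : P) : sigma (sigma f) = f \mPo shift13.
Proof.
rewrite /sigma comp_mpoly_tuple3 !compE; congr (_ \mPo [tuple _; _; _]);
  ring_char2.
Qed.

Lemma sigmaB (f g : P) : sigma (f - g) = sigma f - sigma g.
Proof. exact: comp_mpolyB. Qed.

Lemma comp_mpoly_x123 (f : P) : f \mPo [tuple X1; X2; X3] = f.
Proof.
rewrite -[RHS]comp_mpoly_id; congr (_ \mPo _); apply: eq_from_tnth => i.
by rewrite tnth_mktuple; case: i => [[|[|[|//]]] ?]; congr 'X__; apply: val_inj.
Qed.

Lemma sigma4 (f : P) : sigma (sigma (sigma (sigma f))) = f.
Proof.
by rewrite !sigma_sigma comp_mpoly_tuple3 !compE (addrK_pchar2 mpoly_pchar2)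
  comp_mpoly_x123.
Qed.

Lemma K4_full (f : P) : f \in @K4 k.
Proof.
by rewrite unfold_in /K4 [iter _ _ _]/= /Delta !sigmaB sigma4; apply/eqP; ring_char2.
Qed.

Lemma normx1E : N = X1 * (X1 + X2) * (X1 + X3) * (X1 + X2 + X3).
Proof.
rewrite /normx1 !big_ord_recl big_ord0 /= /sigma !compE mulr1 !mulrA.
by congr (_ * _ * _ * _); ring_char2.
Qed.

Lemma x1_exp4 : X1 ^+ 4 = N + (X3 ^+ 2 + Y) * X1 ^+ 2 + Y * X3 * X1.
Proof. rewrite normx1E; ring_char2. Qed.

Lemma inA0 : inA (0 : P).
Proof. by exists 0; rewrite comp_mpoly0. Qed.
Lemma inA1 : inA (1 : P).
Proof. by exists 1; rewrite comp_mpoly1. Qed.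
Lemma inAC (c : k) : inA (c%:MP : P).
Proof. by exists c%:MP; rewrite comp_mpolyC. Qed.
Lemma inA_normx1 : inA N.
Proof. by exists 'X_(@Ordinal 3 0 isT); rewrite comp_mpolyXU. Qed.
Lemma inA_x2Mx2Dx3 : inA Y.
Proof. by exists 'X_(@Ordinal 3 1 isT); rewrite comp_mpolyXU. Qed.
Lemma inA_x3 : inA X3.
Proof. by exists 'X_(@Ordinal 3 2 isT); rewrite comp_mpolyXU. Qed.
Lemma inAD (a b : P) : inA a -> inA b -> inA (a + b).
Proof. by move=> [q ->] [r ->]; exists (q + r); rewrite comp_mpolyD. Qed.
Lemma inAN (a : P) : inA a -> inA (- a).
Proof. by move=> [q ->]; exists (- q); rewrite comp_mpolyN. Qed.
Lemma inAM (a b : P) : inA a -> inA b -> inA (a * b).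
Proof. by move=> [q ->] [r ->]; exists (q * r); rewrite comp_mpolyM. Qed.
Lemma inAX (a : P) e : inA a -> inA (a ^+ e).
Proof. by move=> [q ->]; exists (q ^+ e); rewrite comp_mpolyXn. Qed.

Local Ltac inA_closure := repeat first [ assumption | apply: inA0 | apply: inA1
  | apply: inA_normx1 | apply: inA_x2Mx2Dx3 | apply: inA_x3 | apply: inAD
  | apply: inAN | apply: inAM | apply: inAX ].

Lemma inA_comp_fixed (S : 3.-tuple P) :
  N \mPo S = N -> Y \mPo S = Y -> X3 \mPo S = X3 -> forall f, inA f -> f \mPo S = f.
Proof.
move=> fixN fixY fix3 f [q ->]; apply: comp_mpoly_fixed => i.
by case: i => [[|[|[|//]]] ?]; rewrite /tnth.
Qed.

Lemma shift12_fixes_A f : inA f -> f \mPo shift12 = f.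
Proof.
by apply: inA_comp_fixed; rewrite ?normx1E /shift12 !compE //; ring_char2.
Qed.
Lemma shift13_fixes_A f : inA f -> f \mPo shift13 = f.
Proof.
by apply: inA_comp_fixed; rewrite ?normx1E /shift13 !compE //; ring_char2.
Qed.
Lemma shift23_fixes_A f : inA f -> f \mPo shift23 = f.
Proof.
by apply: inA_comp_fixed; rewrite ?normx1E /shift23 !compE //; ring_char2.
Qed.

Definition combB (a0 a1 a2 a3 a4 a5 a6 a7 : P) : P :=
  a0 + a1 * X1 + a2 * X2 + a3 * X1 ^+ 2 + a4 * (X1 * X2) + a5 * X1 ^+ 3
  + a6 * (X1 ^+ 2 * X2) + a7 * (X1 ^+ 3 * X2).

Lemma sum_basisB (a : 'I_8 -> P) : \sum_(i < 8) a i * tnth (basisB k) i =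
  combB (a (inord 0)) (a (inord 1)) (a (inord 2)) (a (inord 3))
        (a (inord 4)) (a (inord 5)) (a (inord 6)) (a (inord 7)).
Proof.
rewrite (eq_bigr (fun i : 'I_8 => a (inord i) * nth 0 (basisB k) i)); last first.
  by move=> i _; rewrite inord_val (tnth_nth 0).
rewrite -(big_mkord xpredT (fun j => a (inord j) * nth 0 (basisB k) j)).
by rewrite !big_nat_recl // big_geq // /= /combB; ring.
Qed.

Definition A_span (f : P) := exists a : 'I_8 -> P,
  (forall i, inA (a i)) /\ f = \sum_(i < 8) a i * tnth (basisB k) i.

Lemma A_span_combB (a0 a1 a2 a3 a4 a5 a6 a7 : P) :
  inA a0 -> inA a1 -> inA a2 -> inA a3 -> inA a4 -> inA a5 -> inA a6 -> inA a7 ->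
  A_span (combB a0 a1 a2 a3 a4 a5 a6 a7).
Proof.
move=> *; exists (fun i : 'I_8 => nth 0 [:: a0; a1; a2; a3; a4; a5; a6; a7] i).
by split; [case=> [[|[|[|[|[|[|[|[|]]]]]]]]] | rewrite sum_basisB !inordK].
Qed.

Lemma A_span_ind (Q : P -> Prop) :
  (forall a0 a1 a2 a3 a4 a5 a6 a7, inA a0 -> inA a1 -> inA a2 -> inA a3 ->
     inA a4 -> inA a5 -> inA a6 -> inA a7 -> Q (combB a0 a1 a2 a3 a4 a5 a6 a7)) ->
  forall f, A_span f -> Q f.
Proof. by move=> IH f [a [Aa ->]]; rewrite sum_basisB; apply: IH. Qed.

Lemma A_span1 : A_span 1.
Proof.
have -> : 1 = combB 1 0 0 0 0 0 0 0 by rewrite /combB; ring.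
by apply: A_span_combB; inA_closure.
Qed.

Lemma A_spanD f g : A_span f -> A_span g -> A_span (f + g).
Proof.
move=> Af Ag; move: f Af; apply: A_span_ind => a0 a1 a2 a3 a4 a5 a6 a7 *.
move: g Ag; apply: A_span_ind => b0 b1 b2 b3 b4 b5 b6 b7 *.
have -> : combB a0 a1 a2 a3 a4 a5 a6 a7 + combB b0 b1 b2 b3 b4 b5 b6 b7 =
  combB (a0 + b0) (a1 + b1) (a2 + b2) (a3 + b3) (a4 + b4) (a5 + b5) (a6 + b6)
    (a7 + b7) by rewrite /combB; ring.
by apply: A_span_combB; inA_closure.
Qed.

Lemma A_spanMl c f : inA c -> A_span f -> A_span (c * f).
Proof.
move=> Ac; move: f; apply: A_span_ind => a0 a1 a2 a3 a4 a5 a6 a7 *.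
have -> : c * combB a0 a1 a2 a3 a4 a5 a6 a7 = combB (c * a0) (c * a1) (c * a2)
  (c * a3) (c * a4) (c * a5) (c * a6) (c * a7) by rewrite /combB; ring.
by apply: A_span_combB; inA_closure.
Qed.

Lemma A_span_mulx2 f : A_span f -> A_span (X2 * f).
Proof.
move: f; apply: A_span_ind => a0 a1 a2 a3 a4 a5 a6 a7 *.
have -> : X2 * combB a0 a1 a2 a3 a4 a5 a6 a7 =
  combB (a2 * Y) (a4 * Y) (a0 - a2 * X3) (a6 * Y) (a1 - a4 * X3) (a7 * Y)
    (a3 - a6 * X3) (a5 - a7 * X3) by rewrite /combB; ring.
by apply: A_span_combB; inA_closure.
Qed.

Lemma A_span_mulx1 f : A_span f -> A_span (X1 * f).
Proof.
move: f; apply: A_span_ind => a0 a1 a2 a3 a4 a5 a6 a7 *.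
have -> : X1 * combB a0 a1 a2 a3 a4 a5 a6 a7 =
  combB (a5 * N) (a0 + a5 * (Y * X3)) (a7 * N) (a1 + a5 * (X3 ^+ 2 + Y))
    (a2 + a7 * (Y * X3)) a3 (a4 + a7 * (X3 ^+ 2 + Y)) a6
  by rewrite /combB; ring: x1_exp4.
by apply: A_span_combB; inA_closure.
Qed.

Lemma A_span_mulXn (i : 'I_3) e f : A_span f -> A_span ('X_i ^+ e * f).
Proof.
move=> Af; elim: e => [|e IH]; first by rewrite expr0 mul1r.
rewrite exprS -mulrA; case: i IH => [[|[|[|//]]] lti] IH;
  rewrite (bool_irrelevance lti isT).
- exact: A_span_mulx1.
- exact: A_span_mulx2.
- exact: A_spanMl inA_x3 IH.
Qed.

Lemma A_span_full f : A_span f.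
Proof.
elim/mpolyind: f => [|c m p _ _ Ap].
  by rewrite -(mul0r 1); apply: A_spanMl inA0 A_span1.
apply: A_spanD => //; rewrite -mul_mpolyC; apply: A_spanMl; first exact: inAC.
rewrite mpolyXE_id !big_ord_recl big_ord0 mulr1 -[X in A_span X]mulr1 -!mulrA.
by do 3 apply: A_span_mulXn; apply: A_span1.
Qed.

Lemma neq0_meval (p : P) (v : 'I_3 -> k) : p.@[v] != 0 -> p != 0.
Proof. by apply: contraNneq => ->; rewrite meval0. Qed.

Lemma x2_neq0 : X2 != 0.
Proof. by apply: (@neq0_meval _ (fun _ => 1)); rewrite mevalXU oner_neq0. Qed.
Lemma x3_neq0 : X3 != 0.
Proof. by apply: (@neq0_meval _ (fun _ => 1)); rewrite mevalXU oner_neq0. Qed.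
Lemma x2Dx3_neq0 : X2 + X3 != 0.
Proof.
apply: (@neq0_meval _ (fun i : 'I_3 => (val i == 1%N)%:R)).
by rewrite mevalD !mevalXU /= addr0 oner_neq0.
Qed.

Lemma eq0_by_comp (S : 3.-tuple P) (g c h : P) :
  g = 0 -> c != 0 -> g \mPo S - g = c * h -> h = 0.
Proof.
move=> g0 /mulfI c_inj; rewrite g0 comp_mpoly0 subr0 => ch0.
by apply: c_inj; rewrite -ch0 mulr0.
Qed.

Lemma x1_powers_free (b0 b1 b2 b3 : P) :
  inA b0 -> inA b1 -> inA b2 -> inA b3 ->
  b0 + b1 * X1 + b2 * X1 ^+ 2 + b3 * X1 ^+ 3 = 0 ->
  [/\ b0 = 0, b1 = 0, b2 = 0 & b3 = 0].
Proof.
move=> A0 A1 A2 A3 rel.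
have rel1 : b1 + b2 * X2 + b3 * (X1 ^+ 2 + X1 * X2 + X2 ^+ 2) = 0.
  apply: (eq0_by_comp (S := shift12) rel x2_neq0).
  by rewrite !compE !shift12_fixes_A //; ring_char2.
have b3_0 : b3 = 0.
  apply: (eq0_by_comp (S := shift13) rel1 (mulf_neq0 x3_neq0 x2Dx3_neq0)).
  by rewrite !compE !shift13_fixes_A //; ring_char2.
have rel2 : b1 + b2 * X2 = 0 by rewrite -rel1 b3_0; ring.
have b2_0 : b2 = 0.
  apply: (eq0_by_comp (S := shift23) rel2 x3_neq0).
  by rewrite !compE !shift23_fixes_A //; ring_char2.
have b1_0 : b1 = 0 by rewrite -rel2 b2_0; ring.
by split=> //; rewrite -rel b1_0 b2_0 b3_0; ring.
Qed.

Lemma combB_eq0 (a0 a1 a2 a3 a4 a5 a6 a7 : P) :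
  inA a0 -> inA a1 -> inA a2 -> inA a3 -> inA a4 -> inA a5 -> inA a6 -> inA a7 ->
  combB a0 a1 a2 a3 a4 a5 a6 a7 = 0 ->
  [/\ a0 = 0, a1 = 0, a2 = 0, a3 = 0 & [/\ a4 = 0, a5 = 0, a6 = 0 & a7 = 0]].
Proof.
move=> A0 A1 A2 A3 A4 A5 A6 A7 rel.
have rel_x2 : a2 + a4 * X1 + a6 * X1 ^+ 2 + a7 * X1 ^+ 3 = 0.
  apply: (eq0_by_comp (S := shift23) rel x3_neq0).
  by rewrite /combB !compE !shift23_fixes_A //; ring_char2.
have [a2_0 a4_0 a6_0 a7_0] := x1_powers_free A2 A4 A6 A7 rel_x2.
have rel_1 : a0 + a1 * X1 + a3 * X1 ^+ 2 + a5 * X1 ^+ 3 = 0.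
  by rewrite -rel /combB a2_0 a4_0 a6_0 a7_0; ring.
by have [-> -> -> ->] := x1_powers_free A0 A1 A3 A5 rel_1.
Qed.

End Proposition4p19.

Theorem proposition4p19 (k : fieldType) (hchar : 2%N \in [pchar k]) :
  (forall f : {mpoly k[3]}, f \in @K4 k) /\ free_A_basis (@K4 k) (@basisB k).
Proof.
have K4_all := K4_full hchar.
split=> //; split=> [i|]; first exact: K4_all.
split=> [f _|a Aa]; first exact: A_span_full.
rewrite sum_basisB => /(combB_eq0 hchar (Aa _) (Aa _) (Aa _) (Aa _) (Aa _) (Aa _)
  (Aa _) (Aa _)) [a0 a1 a2 a3 [a4 a5 a6 a7]] i.
by rewrite -(inord_val i); case: i => [[|[|[|[|[|[|[|[|]]]]]]]]].
Qed.
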